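(* Let $t,t'\in B_n$ with $t\neq t'$ and let $G$ be a digraph such that $\mathbb{A}(G)$ satisfies $t\approx t'$. Then $E_G\le L_{t,t'}+1$.
   Context: Digraphs $G=(V,E)$ have $E\subseteq V\times V$, loops allowed, possibly infinite. $\mathbb{A}(G)$ is the groupoid on $V\cup\{\infty\}$ with $xy=x$ if $x,y\in V$, $(x,y)\in E$, and $xy=\infty$ otherwise. $B_n$: binary terms with $x_1,\dots,x_n$ each occurring once in this order; $G(t)$: rooted tree defined by $G(x_i)$ a single vertex and $G(t_1t_2)=G(t_1)\cup G(t_2)$ plus an edge from the leftmost variable of $t_1$ to that of $t_2$; root $x_1$. With $T=G(t)$, $T'=G(t')$ and depth $d_T$: $L_{t,t'}$ is the largest integer $m$ such that for all $x$, if $d_T(x)\le m$ or $d_{T'}(x)\le m$ then $d_T(x)=d_{T'}(x)$. A strongly connected component (SCC) is trivial if it is a single vertex without a loop, nontrivial otherwise. A path $v_0\to\dots\to v_\ell$ is an entryway to a nontrivial SCC $K$ if $v_0,\dots,v_{\ell-1}$ lie in trivial SCCs and $v_\ell\in K$. $E_G$ is the maximal length of an entryway ($\infty$ if unbounded, $-\infty$ if none). *)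

From mathcomp Require Import all_boot.
Set Implicit Arguments. Unset Strict Implicit. Unset Printing Implicit Defensive.

Inductive term : Type := Var of nat | App of term & term.

Fixpoint leaves (t : term) : seq nat :=
  match t with Var i => [:: i] | App t1 t2 => leaves t1 ++ leaves t2 end.

Definition inB (n : nat) (t : term) : Prop := leaves t = iota 1 n.

Fixpoint leftmost (t : term) : nat :=
  match t with Var i => i | App t1 _ => leftmost t1 end.

Fixpoint tedges (t : term) : seq (nat * nat) :=
  match t with
  | Var _ => [::]
  | App t1 t2 => (leftmost t1, leftmost t2) :: tedges t1 ++ tedges t2
  end.

Definition tdepth (t : term) (x k : nat) : Prop :=
  exists p : seq nat,
    [/\ path (fun u v => (u, v) \in tedges t) (leftmost t) p,
        last (leftmost t) p = x & size p = k].

Definition Lprop (n : nat) (t t' : term) (m : nat) : Prop :=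
  forall x, x \in iota 1 n -> forall k k', tdepth t x k -> tdepth t' x k' ->
    (k <= m \/ k' <= m) -> k = k'.

Definition is_L (n : nat) (t t' : term) (m : nat) : Prop :=
  Lprop n t t' m /\ forall m', Lprop n t t' m' -> m' <= m.

(* The groupoid A(G) on option V (None = infinity). *)
Definition Aop (V : Type) (E : V -> V -> bool) (x y : option V) : option V :=
  match x, y with
  | Some u, Some v => if E u v then Some u else None
  | _, _ => None
  end.

Fixpoint eval (V : Type) (E : V -> V -> bool) (a : nat -> option V) (t : term)
  : option V :=
  match t with
  | Var i => a i
  | App t1 t2 => Aop E (eval E a t1) (eval E a t2)
  end.

Definition satisfies (V : Type) (E : V -> V -> bool) (t t' : term) : Prop :=
  forall a : nat -> option V, eval E a t = eval E a t'.

Inductive reach (V : Type) (E : V -> V -> bool) : V -> V -> Prop :=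
  | reach_refl v : reach E v v
  | reach_step u v w : E u v -> reach E v w -> reach E u w.

Definition sconn (V : Type) (E : V -> V -> bool) (u v : V) : Prop :=
  reach E u v /\ reach E v u.

Definition in_trivial_scc (V : Type) (E : V -> V -> bool) (v : V) : Prop :=
  (forall w, sconn E v w -> w = v) /\ ~~ E v v.

(* v0 -> ... -> v_l (given as vs 0, ..., vs l) is an entryway of length l
   to a nontrivial SCC (the SCC of v_l). *)
Definition entryway (V : Type) (E : V -> V -> bool) (vs : nat -> V) (l : nat)
  : Prop :=
  [/\ forall i, i < l -> E (vs i) (vs i.+1),
      forall i, i < l -> in_trivial_scc E (vs i)
    & ~ in_trivial_scc E (vs l)].

From mathcomp Require Import all_boot zify.
From Stdlib Require Import ClassicalEpsilon.
Set Implicit Arguments. Unset Strict Implicit. Unset Printing Implicit Defensive.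

(* A term of B_n is determined by the depth function of its tree, so for
   t <> t' the depths first differ at some level L + 1, at a vertex x with,
   say, d_t'(x) = L + 1 < d_t(x).  Follow an entryway of length l > L + 1 and
   then walk forever inside the nontrivial component it enters; sending each
   variable y to the vertex at position d_t'(y) of this walk maps every edge
   of G(t') to an edge of G, so t' and hence t evaluate to a vertex, and every
   edge of G(t) is mapped to an edge as well.  The parent p of x in G(t) has
   d_t'(p) > L, so the image of the edge p -> x closes a cycle through the
   (L + 1)-st vertex of the walk, although that vertex lies in a trivial
   component. *)

Fixpoint depth (t : term) (y : nat) : nat :=
  match t with
  | Var _ => 0
  | App t1 t2 => if y \in leaves t2 then (depth t2 y).+1 else depth t1 y
  end.

Lemma leaves_leftmost t : leaves t = leftmost t :: behead (leaves t).
Proof. by elim: t => //= t1 -> t2 _. Qed.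

Lemma leftmost_in_leaves t : leftmost t \in leaves t.
Proof. by rewrite leaves_leftmost mem_head. Qed.

Lemma leftmost_leaves t : leftmost t = head 0 (leaves t).
Proof. by rewrite leaves_leftmost. Qed.

Lemma size_leaves_gt0 t : 0 < size (leaves t).
Proof. by rewrite leaves_leftmost. Qed.

Lemma inB_uniq n t : inB n t -> uniq (leaves t).
Proof. by move->; exact: iota_uniq. Qed.

Lemma uniq_leaves_App t1 t2 : uniq (leaves (App t1 t2)) ->
  [/\ uniq (leaves t1), uniq (leaves t2)
    & {in leaves t1, forall y, y \notin leaves t2}].
Proof.
rewrite /= cat_uniq => /and3P[u1 /hasPn t2_t1 u2]; split=> // y y1.
by apply/negP => y2; move: (t2_t1 y y2); rewrite y1.
Qed.

Lemma depth_App_r t1 t2 y :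
  y \in leaves t2 -> depth (App t1 t2) y = (depth t2 y).+1.
Proof. by move=> /= ->. Qed.

Lemma depth_App_l t1 t2 y :
  y \notin leaves t2 -> depth (App t1 t2) y = depth t1 y.
Proof. by move=> /= /negPf ->. Qed.

Lemma depth_eq0 t y : uniq (leaves t) -> y \in leaves t ->
  (depth t y == 0) = (y == leftmost t).
Proof.
elim: t => [i|t1 IH1 t2 IH2] /=; first by rewrite inE => _ /eqP ->; rewrite !eqxx.
case/uniq_leaves_App=> u1 u2 disj; rewrite mem_cat.
case: ifP => [y2 _ | _]; last by rewrite orbF; exact: IH1.
by apply/esym/eqP => ylm; move: (disj _ (leftmost_in_leaves t1)); rewrite -ylm y2.
Qed.

Lemma depth_leftmost t : uniq (leaves t) -> depth t (leftmost t) = 0.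
Proof. by move=> u; apply/eqP; rewrite depth_eq0 ?leftmost_in_leaves. Qed.

Lemma tedges_leaves t u v :
  (u, v) \in tedges t -> (u \in leaves t) && (v \in leaves t).
Proof.
elim: t => [//|t1 IH1 t2 IH2] /=.
rewrite inE !mem_cat => /orP[/eqP[-> ->]|/orP[/IH1|/IH2]].
- by rewrite !leftmost_in_leaves orbT.
- by case/andP=> -> ->.
- by case/andP=> -> ->; rewrite !orbT.
Qed.

Lemma depth_tedge t u v : uniq (leaves t) -> (u, v) \in tedges t ->
  depth t v = (depth t u).+1.
Proof.
elim: t => [//|t1 IH1 t2 IH2] u12 /=; have [u1 u2 disj] := uniq_leaves_App u12.
rewrite inE mem_cat => /orP[/eqP[-> ->]|/orP[uv|uv]].
- rewrite leftmost_in_leaves (negPf (disj _ (leftmost_in_leaves t1))).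
  by rewrite !depth_leftmost.
- have /andP[ut vt] := tedges_leaves uv.
  by rewrite (negPf (disj _ ut)) (negPf (disj _ vt)) IH1.
- by have /andP[-> ->] := tedges_leaves uv; rewrite IH2.
Qed.

Lemma depth_path t u p : uniq (leaves t) ->
  path (fun a b => (a, b) \in tedges t) u p ->
  depth t (last u p) = depth t u + size p.
Proof.
move=> ut; elim: p u => [|v p IH] u /=; first by rewrite addn0.
by case/andP=> uv vp; rewrite IH // (depth_tedge ut uv) addSnnS.
Qed.

Lemma tdepth_depth t x : uniq (leaves t) -> x \in leaves t ->
  tdepth t x (depth t x).
Proof.
elim: t => [i|t1 IH1 t2 IH2] u12.
  by rewrite inE => /eqP ->; exists [::].
have [u1 u2 _] := uniq_leaves_App u12; rewrite /= mem_cat.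
case: ifP => [x2 _ | _]; last rewrite orbF => x1.
  have [p [p2 <- <-]] := IH2 u2 x2.
  exists (leftmost t2 :: p); split=> //=; rewrite inE eqxx /=.
  by apply: sub_path p2 => a b ab; rewrite inE mem_cat ab !orbT.
have [p [p1 <- <-]] := IH1 u1 x1; exists p; split=> //.
by apply: sub_path p1 => a b ab; rewrite inE mem_cat ab orbT.
Qed.

Lemma tdepthP t x k : uniq (leaves t) -> x \in leaves t ->
  tdepth t x k <-> k = depth t x.
Proof.
move=> u xt; split=> [[p [tp <- <-]] | ->]; last exact: tdepth_depth.
by rewrite depth_path // depth_leftmost.
Qed.

Lemma tedges_parent t x : uniq (leaves t) -> x \in leaves t ->
  x != leftmost t -> exists p, (p, x) \in tedges t.
Proof.
elim: t => [i|t1 IH1 t2 IH2] u12 /=; first by rewrite inE => /eqP ->; rewrite eqxx.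
have [u1 u2 _] := uniq_leaves_App u12; rewrite mem_cat.
have [x2 _ _|x2] := boolP (x \in leaves t2); last rewrite orbF => x1 xlm.
  have [->|xlm2] := eqVneq x (leftmost t2).
    by exists (leftmost t1); rewrite mem_head.
  by have [p px] := IH2 u2 x2 xlm2; exists p; rewrite inE mem_cat px !orbT.
by have [p px] := IH1 u1 x1 xlm; exists p; rewrite inE mem_cat px orbT.
Qed.

Lemma index_leaves_App_l t1 t2 y :
  y \in leaves t1 -> index y (leaves (App t1 t2)) < size (leaves t1).
Proof. by move=> y1; rewrite /= index_cat y1 index_mem. Qed.

Lemma index_leftmost_App t1 t2 : uniq (leaves (App t1 t2)) ->
  index (leftmost t2) (leaves (App t1 t2)) = size (leaves t1).
Proof.
case/uniq_leaves_App=> _ _ disj; rewrite /= index_cat.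
have /negPf-> : leftmost t2 \notin leaves t1.
  by apply/negP => /disj; rewrite leftmost_in_leaves.
by rewrite [leaves t2]leaves_leftmost /= eqxx addn0.
Qed.

(* The root of [t2] lies in [t2'], where depth 1 forces it to be the root of
   [t2']; its index in the common leaf sequence is then both [size (leaves t1)]
   and [size (leaves t1')]. *)
Lemma size_leaves_App_l t1 t2 t1' t2' :
  uniq (leaves (App t1 t2)) -> leaves (App t1' t2') = leaves (App t1 t2) ->
  {in leaves (App t1 t2), depth (App t1 t2) =1 depth (App t1' t2')} ->
  size (leaves t1') <= size (leaves t1) -> size (leaves t1) = size (leaves t1').
Proof.
move=> u same_leaves same_depth le_size.
have u' : uniq (leaves (App t1' t2')) by rewrite same_leaves.
have [_ u2 _] := uniq_leaves_App u; have [_ u2' _] := uniq_leaves_App u'.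
have y2 := leftmost_in_leaves t2.
have yt : leftmost t2 \in leaves (App t1 t2) by rewrite /= mem_cat y2 orbT.
have y2' : leftmost t2 \in leaves t2'.
  move: yt; rewrite -same_leaves /= mem_cat => /orP[y1'|//].
  have := index_leaves_App_l t2' y1'.
  by rewrite same_leaves index_leftmost_App // ltnNge le_size.
have y_root : leftmost t2 = leftmost t2'.
  apply/eqP; rewrite -(depth_eq0 u2' y2').
  move: (same_depth _ yt); rewrite !depth_App_r // depth_leftmost //.
  by case=> <-.
by rewrite -(index_leftmost_App u) -(index_leftmost_App u') same_leaves y_root.
Qed.

Lemma depth_inj t t' : uniq (leaves t) -> leaves t' = leaves t ->
  {in leaves t, depth t =1 depth t'} -> t = t'.
Proof.
elim: t t' => [i|t1 IH1 t2 IH2] [j|t1' t2'] u same_leaves same_depth.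
- by case: same_leaves => ->.
- move/(congr1 size): same_leaves; rewrite /= size_cat.
  by have := size_leaves_gt0 t1'; have := size_leaves_gt0 t2'; lia.
- move/(congr1 size): same_leaves; rewrite /= size_cat.
  by have := size_leaves_gt0 t1; have := size_leaves_gt0 t2; lia.
have u' : uniq (leaves (App t1' t2')) by rewrite same_leaves.
have [u1 u2 disj] := uniq_leaves_App u.
have same_size : size (leaves t1') = size (leaves t1).
  have [le_size|/ltnW le_size] := leqP (size (leaves t1')) (size (leaves t1)).
    exact/esym/(size_leaves_App_l u same_leaves same_depth).
  apply: (size_leaves_App_l u' (esym same_leaves)) le_size => y.
  by rewrite same_leaves => yt; exact/esym/same_depth.
move/eqP: same_leaves; rewrite /= eqseq_cat // => /andP[/eqP l1 /eqP l2].
congr App.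
- apply: IH1 => // z z1.
  have zt : z \in leaves (App t1 t2) by rewrite /= mem_cat z1.
  by move: (same_depth z zt); rewrite !depth_App_l ?l2 ?(disj z z1).
- apply: IH2 => // z z2.
  have zt : z \in leaves (App t1 t2) by rewrite /= mem_cat z2 orbT.
  by move: (same_depth z zt); rewrite !depth_App_r ?l2 //; case.
Qed.

Definition agree_upto (t t' : term) (m : nat) : bool :=
  all (fun x => (depth t x <= m) || (depth t' x <= m) ==>
                (depth t x == depth t' x)) (leaves t).

Lemma agree_uptoP t t' m : agree_upto t t' m ->
  {in leaves t, forall x, (depth t x <= m) || (depth t' x <= m) ->
     depth t x = depth t' x}.
Proof. by move=> /allP agree x /agree /implyP eq_x /eq_x /eqP. Qed.

Lemma agree_uptoC t t' m : leaves t' = leaves t ->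
  agree_upto t' t m = agree_upto t t' m.
Proof.
by move=> same; rewrite /agree_upto same; apply: eq_all => x; rewrite orbC eq_sym.
Qed.

Lemma agree_upto0 t t' : uniq (leaves t) -> leaves t' = leaves t ->
  agree_upto t t' 0.
Proof.
move=> u same; have u' : uniq (leaves t') by rewrite same.
have same_root : leftmost t' = leftmost t by rewrite !leftmost_leaves same.
apply/allP=> x xt; have xt' : x \in leaves t' by rewrite same.
rewrite !leqn0 (depth_eq0 u xt) (depth_eq0 u' xt') same_root orbb.
by apply/implyP=> /eqP->; rewrite depth_leftmost // -same_root depth_leftmost.
Qed.

Lemma Lprop_agree_upto n t t' m : inB n t -> inB n t' ->
  Lprop n t t' m <-> agree_upto t t' m.
Proof.
move=> Ht Ht'; have u := inB_uniq Ht; have u' := inB_uniq Ht'.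
rewrite /Lprop -Ht; split=> [agree | /agree_uptoP agree x xt k k'].
  apply/allP=> x xt; have xt' : x \in leaves t' by rewrite Ht' -Ht.
  apply/implyP=> /orP near; apply/eqP.
  exact: agree xt _ _ (tdepth_depth u xt) (tdepth_depth u' xt') near.
have xt' : x \in leaves t' by rewrite Ht' -Ht.
by move=> /(tdepthP _ u xt) -> /(tdepthP _ u' xt') -> /orP; exact: agree.
Qed.

Lemma exists_is_L n t t' : inB n t -> inB n t' -> t <> t' ->
  exists L, is_L n t t' L.
Proof.
move=> Ht Ht' neq; have u := inB_uniq Ht.
have same : leaves t' = leaves t by rewrite Ht Ht'.
have [x xt dx] : exists2 x, x \in leaves t & depth t x != depth t' x.
  apply/hasP; apply/negPn/negP => /hasPn nodiff; apply: neq.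
  by apply: depth_inj u same _ => y /nodiff /negPn /eqP.
have bounded m : agree_upto t t' m -> m <= depth t x.
  move=> /agree_uptoP /(_ x xt) agree; rewrite leqNgt; move: dx; apply: contraNN.
  by move=> lt_xm; apply/eqP/agree; rewrite ltnW.
have [L agreeL maxL] := ex_maxnP (ex_intro _ 0 (agree_upto0 u same)) bounded.
exists L; split=> [|m]; first exact/(Lprop_agree_upto _ Ht Ht').
by move/(Lprop_agree_upto _ Ht Ht'); exact: maxL.
Qed.

Section Digraph.
Variables (V : Type) (E : V -> V -> bool).

Lemma reach_trans u v w : reach E u v -> reach E v w -> reach E u w.
Proof. by elim=> // x y z xy _ IH /IH; exact: reach_step. Qed.

Lemma reach_cases u w : reach E u w -> u = w \/ exists2 v, E u v & reach E v w.
Proof. by case=> [x|x y z xy yz]; [left | right; exists y]. Qed.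

Lemma reach_walk (w : nat -> V) : (forall i, E (w i) (w i.+1)) ->
  forall i j, i <= j -> reach E (w i) (w j).
Proof.
move=> walk i j /subnKC <-; elim: (j - i) => [|k IH].
  by rewrite addn0; exact: reach_refl.
apply: reach_trans IH _; rewrite addnS.
exact: reach_step (walk _) (reach_refl _ _).
Qed.

Lemma trivial_scc_no_return u v :
  in_trivial_scc E u -> reach E u v -> ~~ E v u.
Proof.
case=> scc noloop uv; apply/negP => vu.
have eq_vu : v = u by apply: scc; split=> //; apply: reach_step vu (reach_refl _ _).
by move: vu; rewrite eq_vu; exact/negP.
Qed.

Definition on_cycle (u : V) := exists2 v, E u v & reach E v u.

Lemma not_trivial_on_cycle u : ~ in_trivial_scc E u -> on_cycle u.
Proof.
move=> nontrivial; apply: NNPP => acyclic; apply: nontrivial; split.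
  move=> w [uw wu]; case: (reach_cases uw) => [-> //|[v uv vw]].
  by case: acyclic; exists v => //; exact: reach_trans vw wu.
by apply/negP => uu; apply: acyclic; exists u => //; exact: reach_refl.
Qed.

Lemma on_cycle_succ u : on_cycle u -> exists2 v, E u v & on_cycle v.
Proof.
case=> v uv vu; exists v => //.
case: (reach_cases vu) uv => [<- vv|[y vy yu] uv].
  by exists v => //; exact: reach_refl.
by exists y => //; apply: reach_trans yu (reach_step uv (reach_refl _ _)).
Qed.

Lemma on_cycle_walk u : on_cycle u ->
  exists w : nat -> V, w 0 = u /\ forall i, E (w i) (w i.+1).
Proof.
move=> cu.
have succ (x : {y | on_cycle y}) : {y : {y | on_cycle y} | E (sval x) (sval y)}.
  apply: constructive_indefinite_description.
  by have [y xy cy] := on_cycle_succ (svalP x); exists (exist _ y cy).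
exists (fun i => sval (iter i (fun x => sval (succ x)) (exist _ u cu))).
by split=> // i; rewrite iterS; exact: svalP (succ _).
Qed.

Lemma entryway_walk vs l : entryway E vs l ->
  exists w : nat -> V, (forall i, i <= l -> w i = vs i) /\
                       forall i, E (w i) (w i.+1).
Proof.
case=> steps _ /not_trivial_on_cycle /on_cycle_walk[w [w0 walk]].
exists (fun i => if i <= l then vs i else w (i - l)); split=> [i -> //|i].
case: (ltngtP i l) => [lt_il|lt_li|->].
- exact: steps.
- by rewrite (subSn (ltnW lt_li)); exact: walk.
- by rewrite subSnn -w0; exact: walk.
Qed.

Definition tree_hom (f : nat -> V) (t : term) :=
  forall u v, (u, v) \in tedges t -> E (f u) (f v).

Lemma eval_tree_hom f t : tree_hom f t ->
  eval E (fun y => Some (f y)) t = Some (f (leftmost t)).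
Proof.
elim: t => [//|t1 IH1 t2 IH2] hom /=.
rewrite IH1 => [|u v uv]; last by apply: hom; rewrite inE mem_cat uv orbT.
rewrite IH2 => [|u v uv]; last by apply: hom; rewrite inE mem_cat uv !orbT.
by rewrite /= hom // mem_head.
Qed.

Lemma eval_Some_tree_hom f t z : eval E (fun y => Some (f y)) t = Some z ->
  z = f (leftmost t) /\ tree_hom f t.
Proof.
elim: t z => [i z [<-] //|t1 IH1 t2 IH2 z] /=.
case e1: eval => [z1|] //; case e2: eval => [z2|] //=.
case: ifP => // z12 [<-].
have [eq1 hom1] := IH1 _ e1; have [eq2 hom2] := IH2 _ e2.
split=> // u v; rewrite inE mem_cat => /orP[/eqP[-> ->]|/orP[/hom1|/hom2]] //.
by rewrite -eq1 -eq2.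
Qed.

Lemma satisfies_tree_hom t t' f : satisfies E t t' -> tree_hom f t' -> tree_hom f t.
Proof. by move=> sat /eval_tree_hom; rewrite -sat => /eval_Some_tree_hom[]. Qed.

Lemma walk_depth_tree_hom t (w : nat -> V) : uniq (leaves t) ->
  (forall i, E (w i) (w i.+1)) -> tree_hom (fun y => w (depth t y)) t.
Proof. by move=> u walk x y /(depth_tedge u) ->. Qed.

Lemma entryway_bound_at t t' L x vs l :
  uniq (leaves t) -> leaves t' = leaves t -> satisfies E t t' ->
  agree_upto t t' L -> x \in leaves t ->
  depth t' x = L.+1 -> L.+1 < depth t x -> entryway E vs l -> l <= L.+1.
Proof.
move=> u same sat agreeL xt dx' dx entry; rewrite leqNgt; apply/negP => long.
have u' : uniq (leaves t') by rewrite same.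
have [w [w_vs walk]] := entryway_walk entry.
have hom := satisfies_tree_hom sat (walk_depth_tree_hom u' walk).
have [p px] : exists p, (p, x) \in tedges t.
  apply: (tedges_parent u xt); apply: contraTneq dx => ->.
  by rewrite depth_leftmost.
have /andP[pt _] := tedges_leaves px.
have dp' : L < depth t' p.
  have dp : L < depth t p by rewrite -ltnS -(depth_tedge u px).
  rewrite ltnNge; apply/negP => le_pL.
  have eq_p : depth t p = depth t' p.
    by apply: (agree_uptoP agreeL pt); rewrite le_pL orbT.
  lia.
have back : E (w (depth t' p)) (w L.+1) by rewrite -dx'; exact: hom.
have trivL : in_trivial_scc E (w L.+1).
  by rewrite w_vs 1?ltnW //; case: entry => _ triv _; exact: triv.
by move: back; apply/negP/(trivial_scc_no_return trivL)/reach_walk.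
Qed.

Lemma entryway_bound t t' L vs l :
  uniq (leaves t) -> leaves t' = leaves t -> satisfies E t t' ->
  agree_upto t t' L -> ~~ agree_upto t t' L.+1 -> entryway E vs l -> l <= L.+1.
Proof.
move=> u same sat agreeL /allPn[x xt]; rewrite negb_imply => /andP[near ne] entry.
have [lt_t lt_t'] : L < depth t x /\ L < depth t' x.
  by split; rewrite ltnNge; move: ne; apply: contraNN => le;
    apply/eqP/(agree_uptoP agreeL xt); rewrite le ?orbT.
case/orP: near => near.
- have u' : uniq (leaves t') by rewrite same.
  have xt' : x \in leaves t' by rewrite same.
  have agree'L : agree_upto t' t L by rewrite agree_uptoC.
  have sat' : satisfies E t' t by move=> a; rewrite sat.
  apply: (entryway_bound_at u' (esym same) sat' agree'L xt' _ _ entry).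
    by lia.
  by move/eqP: ne; lia.
- by apply: (entryway_bound_at u same sat agreeL xt _ _ entry); move/eqP: ne; lia.
Qed.

End Digraph.

Theorem lemma6p7 (n : nat) (t t' : term) (V : Type) (E : V -> V -> bool) :
  inB n t -> inB n t' -> t <> t' -> satisfies E t t' ->
  (exists L, is_L n t t' L) /\
  (forall L, is_L n t t' L ->
     forall (vs : nat -> V) (l : nat), entryway E vs l -> l <= L.+1).
Proof.
move=> Ht Ht' neq sat; split; first exact: exists_is_L.
move=> L [/(Lprop_agree_upto _ Ht Ht') agreeL maxL] vs l entry.
have disagree : ~~ agree_upto t t' L.+1.
  by apply/negP => /(Lprop_agree_upto _ Ht Ht') /maxL; rewrite ltnn.
have same : leaves t' = leaves t by rewrite Ht Ht'.
exact: entryway_bound (inB_uniq Ht) same sat agreeL disagree entry.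
Qed.
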